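(* Assume $f$ has a unique global maximizer $g$ and the problem contains no weak epistasis. Then for every $v\in V$, $\mathcal C(\mathcal M_{SO}(v))=\mathcal{IN}^*(v)$; consequently the minimum stationary optimum of $v$ is unique and equals $\{(u,g[u]):u\in\mathcal{IN}^*(v)\}$.
   Context: Fix $\ell\ge1$, loci $V=\{0,\dots,\ell-1\}$, chromosomes $\vec y\in\{0,1\}^V$, fitness $f:\{0,1\}^V\to\mathbb R$ (maximized) with unique global maximizer $g$. An assignment $A$ is a set of pairs $(v,a)$ ($v\in V$, $a\in\{0,1\}$) with at most one pair per locus; $A[v]=a$ if $(v,a)\in A$, else $A[v]=*$; coverage $\mathcal C(A)=\{v:A[v]\ne*\}$. $\Psi_A$ (constrained optima) is the set of chromosomes agreeing with $A$ on $\mathcal C(A)$ with maximum fitness among such chromosomes; $\Psi_A[v]=\{\psi_v:\psi\in\Psi_A\}$. For full assignments $B$, $f(B)$ is the fitness of the corresponding chromosome. Epistasis: for $v\in V$ and nonempty $S\subseteq V\setminus\{v\}$, $S\Rightarrow v$ iff for every $s\in S$ there exists an assignment $A$ with $\mathcal C(A)=S$ and $\Psi_A[v]\neq\Psi_{A\setminus\{(s,A[s])\}}[v]$; the empty set is never epistatic. An epistasis $S\Rightarrow v$ with $|S|\ge2$ is weak if no nonempty proper subset $T\subsetneq S$ has $T\Rightarrow v$; ''no weak epistasis'' means no epistasis is weak. The epistatic graph (EG) is the directed graph on $V$ with an edge $u\to v$ iff $\{u\}\Rightarrow v$. $\mathcal{IN}^0(v)=\{v\}$, $\mathcal{IN}^i(v)=\{u:\exists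 w\in\mathcal{IN}^{i-1}(v),\ \{u\}\Rightarrow w\}$ for $i\ge1$, $\mathcal{IN}^*(v)=\bigcup_{i=0}^{\ell-1}\mathcal{IN}^i(v)$. A stationary optimum is a nonempty assignment $A$ such that for every assignment $A'\neq A$ with $\mathcal C(A')=\mathcal C(A)$ and every assignment $R$ with $\mathcal C(R)=V\setminus\mathcal C(A)$, $f(A\cup R)>f(A'\cup R)$. The minimum stationary optimum $\mathcal M_{SO}(v)$ of locus $v$ is a stationary optimum $A$ with $v\in\mathcal C(A)$ of minimum size. *)

From mathcomp Require Import all_boot all_order all_algebra.
Set Implicit Arguments. Unset Strict Implicit. Unset Printing Implicit Defensive.
Import Order.TTheory GRing.Theory Num.Theory.
Local Open Scope ring_scope.

Section Epi.
Variable l : nat.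
Variable R : realFieldType.

Definition chrom := {ffun 'I_l -> bool}.
(* an assignment: at most one value per locus; A v = None means A[v] = * *)
Definition assign := {ffun 'I_l -> option bool}.

Variable f : chrom -> R.

Definition coverage (A : assign) : {set 'I_l} := [set v | A v != None].

Definition agrees (A : assign) (y : chrom) : bool :=
  [forall v, (A v == None) || (A v == Some (y v))].

Definition Psi (A : assign) : {set chrom} :=
  [set y | agrees A y && [forall z, agrees A z ==> (f z <= f y)]].

Definition PsiAt (A : assign) (v : 'I_l) : {set bool} := [set (y : chrom) v | y in Psi A].

Definition remove (A : assign) (s : 'I_l) : assign :=
  [ffun u => if u == s then None else A u].

Definition epistatic (S : {set 'I_l}) (v : 'I_l) : bool :=
  [&& S != set0, v \notin S &
   [forall s in S, exists A : assign,
       (coverage A == S) && (PsiAt A v != PsiAt (remove A s) v)]].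

Definition weak_epistasis (S : {set 'I_l}) (v : 'I_l) : bool :=
  [&& epistatic S v, (2 <= #|S|)%N &
   [forall T : {set 'I_l}, (T != set0) && (T \proper S) ==> ~~ epistatic T v]].

Definition no_weak_epistasis : Prop :=
  forall S v, ~~ weak_epistasis S v.

Fixpoint IN (v : 'I_l) (i : nat) : {set 'I_l} :=
  match i with
  | 0 => [set v]
  | i'.+1 => [set u | [exists w in IN v i', epistatic [set u] w]]
  end.

Definition INstar (v : 'I_l) : {set 'I_l} := \bigcup_(i < l) IN v i.

(* the full assignment A \cup R, for C(R) = V \ C(A) *)
Definition combine (A Rr : assign) : chrom :=
  [ffun u => match A u with Some b => b | None => odflt false (Rr u) end].

Definition stationary_optimum (A : assign) : Prop :=
  coverage A != set0 /\
  forall (A' Rr : assign), A' != A -> coverage A' = coverage A ->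
    coverage Rr = ~: coverage A ->
    f (combine A' Rr) < f (combine A Rr).

Definition is_min_SO (v : 'I_l) (A : assign) : Prop :=
  [/\ stationary_optimum A, v \in coverage A &
      forall B, stationary_optimum B -> v \in coverage B ->
        (#|coverage A| <= #|coverage B|)%N ].

Definition restrict (g : chrom) (S : {set 'I_l}) : assign :=
  [ffun u => if u \in S then Some (g u) else None].

End Epi.

From mathcomp Require Import all_boot all_order all_algebra.
Set Implicit Arguments. Unset Strict Implicit. Unset Printing Implicit Defensive.
Import Order.TTheory GRing.Theory Num.Theory.
Local Open Scope ring_scope.

(* Every stationary optimum is the restriction of [g] to its coverage, and that
   coverage is closed under incoming single-locus epistasis ([{u} => w] with [w]
   covered forces [u] covered); so a stationary optimum covering [v] covers
   IN*(v).  Conversely, let [C] be closed in this sense.  Then the constrained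
   optima of any assignment supported outside [C] agree with [g] on [C]: a
   smallest support where this fails at some [w] in [C] is epistatic on [w],
   while none of its proper subsets is, so by the absence of weak epistasis it
   is a singleton [{u}] with [{u} => w], whence [u] lies in [C].  This makes
   [g] restricted to [C] a stationary optimum, and taking [C] = IN*(v) gives the
   unique minimum stationary optimum of [v]. *)

Section Assignments.
Variable l : nat.
Implicit Types (A B Rr : assign l) (y : chrom l) (S : {set 'I_l}).

Lemma agreesP A y :
  reflect {in coverage A, forall v, A v = Some (y v)} (agrees A y).
Proof.
apply: (iffP forallP) => [H v | H v].
  by move: (H v); rewrite inE; case: (A v) => [b|] //= /eqP.
case: (boolP (v \in coverage A)) => [/H -> | ]; first by rewrite eqxx orbT.
by rewrite inE negbK => ->.
Qed.

Lemma agrees_inj A B y :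
  agrees A y -> agrees B y -> coverage A = coverage B -> A = B.
Proof.
move=> /agreesP yA /agreesP yB cAB; apply/ffunP => v.
case: (boolP (v \in coverage A)) => vA; first by rewrite yA // yB // -cAB.
move: (vA); rewrite cAB !inE !negbK => /eqP ->.
by move: vA; rewrite inE negbK => /eqP.
Qed.

Lemma agrees_cov0 A y : coverage A = set0 -> agrees A y.
Proof. by move=> cA; apply/agreesP => v; rewrite cA inE. Qed.

Lemma coverage_restrict y S : coverage (restrict y S) = S.
Proof. by apply/setP => u; rewrite !inE ffunE; case: (u \in S). Qed.

Lemma agrees_restrict y S : agrees (restrict y S) y.
Proof. by apply/agreesP => v; rewrite coverage_restrict ffunE => ->. Qed.

Lemma coverage_remove A s : coverage (remove A s) = coverage A :\ s.
Proof. by apply/setP => u; rewrite !inE ffunE; case: (u == s). Qed.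

Lemma agrees_combine_l A Rr : agrees A (combine A Rr).
Proof. by apply/agreesP => v; rewrite inE ffunE; case: (A v). Qed.

Lemma agrees_combine_r A Rr :
  coverage Rr = ~: coverage A -> agrees Rr (combine A Rr).
Proof.
move=> cR; apply/agreesP => v vR; move: (vR); rewrite cR !inE negbK ffunE.
by move=> /eqP ->; move: vR; rewrite inE; case: (Rr v).
Qed.

Lemma combine_unique A Rr y : coverage Rr = ~: coverage A ->
  agrees A y -> agrees Rr y -> combine A Rr = y.
Proof.
move=> cR /agreesP yA /agreesP yR; apply/ffunP => v; rewrite ffunE.
case: (boolP (v \in coverage A)) => vA; first by rewrite yA.
have vR : v \in coverage Rr by rewrite cR inE.
by move: vA; rewrite inE negbK => /eqP ->; rewrite yR.
Qed.

Lemma combine_restrict y S : combine (restrict y S) (restrict y (~: S)) = y.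
Proof.
by apply: combine_unique; rewrite ?agrees_restrict // !coverage_restrict.
Qed.

End Assignments.

Section ConstrainedOptima.
Variables (l : nat) (R : realFieldType) (f : chrom l -> R).
Implicit Types (A B Rr : assign l) (y z : chrom l) (C S T : {set 'I_l}).

Lemma PsiP A y :
  reflect (agrees A y /\ forall z, agrees A z -> f z <= f y) (y \in Psi f A).
Proof.
rewrite inE; apply: (iffP andP) => -[yA ymax]; split=> //.
  by move=> z zA; have /implyP := forallP ymax z; apply.
by apply/forallP => z; apply/implyP; apply: ymax.
Qed.

Lemma Psi_exists A : exists y, y \in Psi f A.
Proof.
pose y0 : chrom l := [ffun u => odflt false (A u)].
have y0A : agrees A y0 by apply/agreesP => v; rewrite inE ffunE; case: (A v).
by case: (arg_maxP f y0A) => y yA ymax; exists y; apply/PsiP.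
Qed.

Lemma PsiAt_set1P A w b :
  reflect {in Psi f A, forall y, y w = b} (PsiAt f A w == [set b]).
Proof.
apply: (iffP eqP) => [PAw y Py | Hb].
  by apply/set1P; rewrite -PAw; apply: imset_f.
apply/setP => c; rewrite inE; apply/imsetP/eqP => [[y Py ->] | ->]; first exact: Hb.
by have [y Py] := Psi_exists A; exists y; rewrite ?Hb.
Qed.

Lemma PsiAt_const_not_epistatic T w b :
  (forall B, coverage B \subset T -> PsiAt f B w = [set b]) -> ~~ epistatic f T w.
Proof.
move=> cst; apply/negP => /and3P[/set0Pn[t tT] _ /forallP/(_ t)].
rewrite tT => /existsP[B /andP[/eqP cB]]; rewrite !cst ?eqxx // ?cB //.
by rewrite coverage_remove cB subD1set.
Qed.

Lemma no_weak_epistasis_singleton S w : no_weak_epistasis f ->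
  epistatic f S w -> (forall T, T != set0 -> T \proper S -> ~~ epistatic f T w) ->
  exists u, S = [set u].
Proof.
move=> nw eSw minS; apply/cards1P; rewrite eqn_leq card_gt0.
have /and3P[-> _ _] := eSw; rewrite andbT leqNgt; apply: contra (nw S w) => S2.
rewrite /weak_epistasis eSw S2; apply/forallP => T; apply/implyP => /andP[].
exact: minS.
Qed.

Definition epistasis_closed C :=
  forall u w, w \in C -> epistatic f [set u] w -> u \in C.

Lemma INstar_sub_closed v C : epistasis_closed C -> v \in C -> INstar f v \subset C.
Proof.
move=> clC vC; apply/bigcupsP => i _; elim: (nat_of_ord i) => [|k IHk] /=.
  by rewrite sub1set.
apply/subsetP => u; rewrite inE => /existsP[w /andP[wk /clC]]; apply.
exact: subsetP IHk w wk.
Qed.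

Definition IN_step v (X : {set 'I_l}) : {set 'I_l} :=
  v |: [set u | [exists w in X, epistatic f [set u] w]].

Lemma IN_step_homo v : {homo IN_step v : X Y / X \subset Y}.
Proof.
move=> X Y XY; apply/setUS/subsetP => u; rewrite !inE.
by move=> /existsP[w /andP[wX e]]; apply/existsP; exists w; rewrite (subsetP XY).
Qed.

Lemma mem_iter_IN_step v k u :
  u \in iter k (IN_step v) set0 <-> exists2 i, (i < k)%N & u \in IN f v i.
Proof.
elim: k u => [|k IHk] u /=; first by rewrite inE; split=> // -[].
rewrite !inE; split.
- case/orP=> [/eqP -> | /existsP[w /andP[/IHk[i ik wi] e]]].
    by exists 0%N; rewrite ?inE.
  by exists i.+1 => //=; rewrite inE; apply/existsP; exists w; rewrite wi.
- case=> [[|i] ik] /=; first by rewrite inE => ->.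
  rewrite inE => /existsP[w /andP[wi e]].
  by apply/orP; right; apply/existsP; exists w; rewrite e andbT; apply/IHk; exists i.
Qed.

(* [fixset] iterates [#|'I_l|] = [l] times, matching the range [i < l] of the union in [INstar]. *)
Lemma INstar_fixset v : INstar f v = fixset (IN_step v).
Proof.
apply/setP => u; rewrite /fixset card_ord; apply/bigcupP/idP.
- by case=> i _ ui; apply/mem_iter_IN_step; exists i.
- by case/mem_iter_IN_step=> i il ui; exists (Ordinal il).
Qed.

Lemma INstar_closed v : epistasis_closed (INstar f v).
Proof.
move=> u w; rewrite INstar_fixset => wI e.
rewrite -fixsetK; last exact: IN_step_homo.
by rewrite !inE; apply/orP; right; apply/existsP; exists w; rewrite wI.
Qed.

Lemma mem_INstar v : (0 < l)%N -> v \in INstar f v.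
Proof. by move=> l0; apply/bigcupP; exists (Ordinal l0); rewrite ?inE. Qed.

Section UniqueMaximizer.
Variable g : chrom l.
Hypothesis g_max : forall y, y != g -> f y < f g.

Lemma Psi_cov0 A : coverage A = set0 -> Psi f A = [set g].
Proof.
move=> cA; have agA y : agrees A y by apply: agrees_cov0.
apply/setP => y; rewrite in_set1; apply/PsiP/eqP.
  move=> [_ ymax]; apply: contraTeq (ymax g (agA g)) => /g_max; by rewrite -ltNge.
move=> ->; split=> [|z _]; first exact: agA.
by case: (eqVneq z g) => [-> // | /g_max/ltW].
Qed.

Lemma PsiAt_cov0 A w : coverage A = set0 -> PsiAt f A w = [set g w].
Proof. by move=> /Psi_cov0; rewrite /PsiAt => ->; apply: imset_set1. Qed.

Lemma stationary_optimumE A :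
  stationary_optimum f A -> A = restrict g (coverage A).
Proof.
move=> [_ SA]; apply/eqP; apply: contraT => nA.
set Rr := restrict g (~: coverage A).
rewrite eq_sym in nA.
have cAg : combine A Rr != g.
  apply: contra nA => /eqP gA; apply/eqP/esym/(@agrees_inj _ _ _ g).
  - by rewrite -gA agrees_combine_l.
  - exact: agrees_restrict.
  - by rewrite coverage_restrict.
have := SA _ Rr nA (coverage_restrict _ _) (coverage_restrict _ _).
by rewrite combine_restrict ltNge (ltW (g_max cAg)).
Qed.

(* A deviation [y] from [g] at [w] within the optima of the witness [B], spread
   over the loci outside [A], would beat [A] itself. *)
Lemma stationary_optimum_closed A :
  stationary_optimum f A -> epistasis_closed (coverage A).
Proof.
move=> SA u w wA /and3P[_ _ /forallP/(_ u)]; rewrite set11.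
move=> /existsP[B /andP[/eqP cB]]; apply: contraTT => uA.
rewrite negbK [PsiAt f (remove B u) w]PsiAt_cov0; last first.
  by rewrite coverage_remove cB setDv.
apply/PsiAt_set1P => y Py; apply/eqP; apply: contraT => ywg.
have [/agreesP yB ymax] := PsiP _ _ Py.
have Aw : A w = Some (g w) by rewrite (stationary_optimumE SA) ffunE wA.
have [_ SA'] := SA; set Rr := restrict y (~: coverage A).
have yA : restrict y (coverage A) != A.
  by apply: contra ywg => /eqP/ffunP/(_ w); rewrite ffunE wA Aw => -[->].
have zB : agrees B (combine A Rr).
  apply/agreesP => v; rewrite cB inE => /eqP ->; rewrite yB ?cB ?set11 //.
  by rewrite !ffunE inE uA; move: uA; rewrite inE negbK => /eqP ->.
have := SA' _ Rr yA (coverage_restrict _ _) (coverage_restrict _ _).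
by rewrite combine_restrict ltNge ymax.
Qed.

Lemma PsiAt_closed C A w : no_weak_epistasis f -> epistasis_closed C ->
  coverage A \subset ~: C -> w \in C -> PsiAt f A w = [set g w].
Proof.
move=> nw clC; have [n] := ubnP #|coverage A|; elim: n A => // n IH A.
rewrite ltnS => An AC wC.
have IHs B : coverage B \proper coverage A -> PsiAt f B w = [set g w].
  move=> BA; apply: IH wC; first exact: leq_trans (proper_card BA) An.
  exact: subset_trans (proper_sub BA) AC.
have [/PsiAt_cov0 // | A0] := eqVneq (coverage A) set0.
apply/eqP; apply: contraT => dev.
have wA : w \notin coverage A by apply: contraL wC => /(subsetP AC); rewrite inE.
have epiA : epistatic f (coverage A) w.
  rewrite /epistatic A0 wA; apply/forallP => s; apply/implyP => sA.
  by apply/existsP; exists A; rewrite eqxx (IHs (remove A s)) // coverage_remove properD1.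
have [|u Au] := no_weak_epistasis_singleton nw epiA.
  move=> T _ TA; apply: (@PsiAt_const_not_epistatic _ _ (g w)) => B BT.
  exact/IHs/(sub_proper_trans BT).
have uC : u \in C by apply: clC wC _; rewrite -Au.
by have := subsetP AC u; rewrite Au set11 inE uC => /(_ isT).
Qed.

Lemma stationary_optimum_restrict C : no_weak_epistasis f ->
  C != set0 -> epistasis_closed C -> stationary_optimum f (restrict g C).
Proof.
move=> nw C0 clC; split; first by rewrite coverage_restrict.
move=> A' Rr; rewrite coverage_restrict => nA cA cR.
have optC y : y \in Psi f Rr -> agrees (restrict g C) y.
  move=> Py; apply/agreesP => v; rewrite coverage_restrict ffunE => vC.
  rewrite vC; congr Some; apply/esym/(PsiAt_set1P Rr v (g v)) => //.
  by rewrite (PsiAt_closed nw clC) // cR.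
have [y Py] := Psi_exists Rr; have [yR ymax] := PsiP _ _ Py.
rewrite (combine_unique _ (optC _ Py) yR) ?coverage_restrict //.
have zR : agrees Rr (combine A' Rr) by rewrite agrees_combine_r ?cA.
rewrite lt_def ymax // andbT; apply: contra nA => /eqP fzy.
have Pz : combine A' Rr \in Psi f Rr.
  by apply/PsiP; split=> // z zR'; rewrite -fzy ymax.
apply/eqP/(agrees_inj (agrees_combine_l A' Rr) (optC _ Pz)).
by rewrite coverage_restrict.
Qed.

End UniqueMaximizer.
End ConstrainedOptima.

Theorem theorem1 (l : nat) (R : realFieldType) (f : chrom l -> R) (g : chrom l) :
  (0 < l)%N ->
  (forall y : chrom l, y != g -> f y < f g) ->
  no_weak_epistasis f ->
  forall v : 'I_l,
    (forall A : assign l, is_min_SO f v A -> coverage A = INstar f v) /\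
    (forall A : assign l, is_min_SO f v A <-> A = restrict g (INstar f v)).
Proof.
move=> l0 g_max nw v; set C := INstar f v.
have vC : v \in C := mem_INstar f v l0.
have C0 : C != set0 by apply/set0Pn; exists v.
have SC := stationary_optimum_restrict g_max nw C0 (@INstar_closed _ _ f v).
have C_sub A : stationary_optimum f A -> v \in coverage A -> C \subset coverage A.
  by move=> SA; apply: INstar_sub_closed (stationary_optimum_closed g_max SA).
have min_cov A : is_min_SO f v A -> coverage A = C.
  case=> SA vA Amin; apply/esym/eqP; rewrite eqEcard C_sub //=.
  by have := Amin _ SC; rewrite coverage_restrict; apply.
split=> // A; split=> [MA | ->].
  have [SA _ _] := MA.
  by rewrite (stationary_optimumE g_max SA) (min_cov A MA).
split; rewrite ?coverage_restrict // => B SB vB.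
by rewrite subset_leq_card ?C_sub.
Qed.
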